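(* Let $T$ be an invertible bilateral weighted (forward) shift on $\ell^2(\mathbb{Z})$, i.e. $Te_n=w_ne_{n+1}$ for $n\in\mathbb{Z}$ with weights satisfying $0<\inf_n|w_n|\le\sup_n|w_n|<\infty$, and let $B=T^{-1}$. Let $(n_k)_{k\in\mathbb{N}}$ be an increasing sequence of positive integers, and let $\mathcal{M}$ be the closed subspace of $\ell^2(\mathbb{Z})$ spanned by $\{e_{m_i}:i\in\mathbb{N}\}$ for some integers $m_i$, with $T^{n_k}\mathcal{M}\subseteq\mathcal{M}$ for all $k$. If $T^{n_k}e_{m_i}\to0$ as $k\to\infty$ for some $i$, then $T^{n_k}e_{m_r}\to0$ for all $r\in\mathbb{N}$. If $\|T^{n_k}e_{m_i}\|\,\|B^{n_k}e_{m_j}\|\to0$ as $k\to\infty$ for some $i,j$, then $\|T^{n_k}e_{m_r}\|\,\|B^{n_k}e_{m_p}\|\to0$ for all $r,p\in\mathbb{N}$.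
   Context: $(e_n)_{n\in\mathbb{Z}}$ is the canonical orthonormal basis of $\ell^2(\mathbb{Z})$. *)

From Stdlib Require Import Reals ZArith List ClassicalEpsilon.
Open Scope R_scope.

(** Complex numbers as pairs (re, im). *)
Definition Cpx := (R * R)%type.
Definition C0 : Cpx := (0, 0).
Definition C1 : Cpx := (1, 0).
Definition Cadd (a b : Cpx) : Cpx := (fst a + fst b, snd a + snd b).
Definition Copp (a : Cpx) : Cpx := (- fst a, - snd a).
Definition Cmul (a b : Cpx) : Cpx :=
  (fst a * fst b - snd a * snd b, fst a * snd b + snd a * fst b).
Definition Cmod (a : Cpx) : R := sqrt (fst a ^ 2 + snd a ^ 2).

Definition vec := Z -> Cpx.

(* |x_j|^2 + |x_{-j-1}|^2, j : nat, enumerates all coordinates *)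
Definition sqterm (x : vec) (j : nat) : R :=
  Cmod (x (Z.of_nat j)) ^ 2 + Cmod (x (- Z.of_nat j - 1)%Z) ^ 2.

Definition is_l2 (x : vec) : Prop := exists s, infinite_sum (sqterm x) s.

(* sum_{n in Z} |x_n|^2 (meaningful for x in ℓ²) *)
Definition l2sq (x : vec) : R :=
  epsilon (inhabits 0) (fun s => infinite_sum (sqterm x) s).

Definition l2norm (x : vec) : R := sqrt (l2sq x).

Definition vsub (x y : vec) : vec := fun z => Cadd (x z) (Copp (y z)).

Definition e (k : Z) : vec := fun z => if Z.eq_dec z k then C1 else C0.

(** Bilateral weighted forward shift: T e_n = w_n e_{n+1},
    i.e. (T x)_n = w_{n-1} x_{n-1}. *)
Definition wshift (w : Z -> Cpx) (x : vec) : vec :=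
  fun n => Cmul (w (n - 1)%Z) (x (n - 1)%Z).

Fixpoint lincomb (m : nat -> Z) (l : list (nat * Cpx)) : vec :=
  match l with
  | nil => fun _ => C0
  | (i, c) :: l' => fun z => Cadd (Cmul c (e (m i) z)) (lincomb m l' z)
  end.

Definition in_cspan (m : nat -> Z) (x : vec) : Prop :=
  is_l2 x /\
  forall eps, eps > 0 -> exists l : list (nat * Cpx), l2norm (vsub x (lincomb m l)) < eps.

Fixpoint opow (A : vec -> vec) (k : nat) (x : vec) : vec :=
  match k with O => x | S k' => A (opow A k' x) end.

(* The theorem holds for a simple structural reason: on a bilateral weighted
   shift with weights bounded above and below, the orbits of two basis vectors
   are uniformly comparable.  Write  P(k,n) = |w_k| |w_(k+1)| ... |w_(k+n-1)|.
   Then  T^n e_k = (w_k...w_(k+n-1)) e_(k+n),  so  ||T^n e_k|| = P(k,n),  and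
   B^n e_k is a multiple of e_(k-n) with  ||B^n e_k|| = 1 / P(k-n,n).  Moving
   the starting index by one changes P(k,n) by the factor |w_(k+n)|/|w_k|,
   which lies in [c/d, d/c]; hence  P(b,n) <= (d/c)^|b-a| P(a,n)  for all n. *)

From Pilot Require Import Defs.
From Stdlib Require Import Reals ZArith Lra Lia FunctionalExtensionality ClassicalEpsilon.
Open Scope R_scope.

Lemma Cmod_ge0 (a : Cpx) : 0 <= Cmod a.
Proof. apply sqrt_pos. Qed.

Lemma Cmod_C0 : Cmod C0 = 0.
Proof. unfold Cmod, C0; simpl. replace (0 * (0 * 1) + 0 * (0 * 1)) with 0 by ring. apply sqrt_0. Qed.

Lemma Cmod_C1 : Cmod Defs.C1 = 1.
Proof. unfold Cmod, Defs.C1; simpl. replace (1 * (1 * 1) + 0 * (0 * 1)) with 1 by ring. apply sqrt_1. Qed.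

Lemma Cmod_mul (a b : Cpx) : Cmod (Cmul a b) = Cmod a * Cmod b.
Proof.
  destruct a as [x y], b as [p q]; unfold Cmod, Cmul; simpl.
  rewrite <- sqrt_mult by nra. f_equal. ring.
Qed.

Lemma Cmul_C0 (a : Cpx) : Cmul a C0 = C0.
Proof. destruct a; unfold Cmul, C0; simpl; f_equal; ring. Qed.

Definition Cinv (a : Cpx) : Cpx :=
  (fst a / (fst a ^ 2 + snd a ^ 2), - snd a / (fst a ^ 2 + snd a ^ 2)).

Lemma Cmul_Cinv (a u : Cpx) : Cmod a > 0 -> Cmul a (Cmul (Cinv a) u) = u.
Proof.
  destruct a as [x y], u as [p q]; unfold Cmod, Cmul, Cinv; simpl; intros Ha.
  assert (Hnz : x * (x * 1) + y * (y * 1) <> 0).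
  { intro H0. rewrite H0, sqrt_0 in Ha. lra. }
  f_equal; field; intro H0; apply Hnz; nra.
Qed.

Definition single (k : Z) (v : Cpx) : vec := fun z => if Z.eq_dec z k then v else C0.

Lemma e_single (k : Z) : e k = single k Defs.C1.
Proof. reflexivity. Qed.

Definition coord_index (k : Z) : nat :=
  if Z_le_dec 0 k then Z.to_nat k else Z.to_nat (- k - 1).

Lemma sqterm_single (k : Z) (v : Cpx) (j : nat) :
  sqterm (single k v) j = if Nat.eq_dec j (coord_index k) then Cmod v ^ 2 else 0.
Proof.
  unfold sqterm, single, coord_index.
  destruct (Z_le_dec 0 k); destruct (Nat.eq_dec j _);
  destruct (Z.eq_dec (Z.of_nat j) k); destruct (Z.eq_dec (- Z.of_nat j - 1)%Z k);
  try lia; rewrite ?Cmod_C0; ring.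
Qed.

Lemma infinite_sum_single_term (f : nat -> R) (j0 : nat) (V : R) :
  (forall j, f j = if Nat.eq_dec j j0 then V else 0) -> infinite_sum f V.
Proof.
  intros Hf.
  assert (Partial : forall n, sum_f_R0 f n = if le_dec j0 n then V else 0).
  { induction n as [|n IH]; simpl.
    - rewrite Hf. destruct (Nat.eq_dec 0 j0); destruct (le_dec j0 0); try lia; auto.
    - rewrite IH, Hf. destruct (Nat.eq_dec (S n) j0); destruct (le_dec j0 n);
      destruct (le_dec j0 (S n)); try lia; ring. }
  intros eps Heps. exists j0; intros n Hn.
  rewrite Partial. destruct (le_dec j0 n); [|lia].
  unfold R_dist. replace (V - V) with 0 by ring. rewrite Rabs_R0; lra.
Qed.

Lemma single_l2 (k : Z) (v : Cpx) : is_l2 (single k v) /\ l2norm (single k v) = Cmod v.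
Proof.
  assert (Hs : infinite_sum (sqterm (single k v)) (Cmod v ^ 2)).
  { apply (infinite_sum_single_term _ (coord_index k)). apply sqterm_single. }
  split; [exists (Cmod v ^ 2); exact Hs|].
  unfold l2norm, l2sq.
  pose proof (epsilon_spec (inhabits 0) (fun s => infinite_sum (sqterm (single k v)) s)
                (ex_intro _ _ Hs)) as Heps.
  rewrite (uniqueness_sum _ _ _ Heps Hs). apply sqrt_pow2, Cmod_ge0.
Qed.

Fixpoint wprod (w : Z -> Cpx) (k : Z) (n : nat) : R :=
  match n with O => 1 | S n' => Cmod (w (k + Z.of_nat n')%Z) * wprod w k n' end.

Lemma wprod_ge0 (w : Z -> Cpx) (k : Z) (n : nat) : 0 <= wprod w k n.
Proof.
  induction n; simpl; [lra|].
  pose proof (Cmod_ge0 (w (k + Z.of_nat n)%Z)); nra.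
Qed.

Lemma wprod_S_first (w : Z -> Cpx) (n : nat) :
  forall k, wprod w k (S n) = Cmod (w k) * wprod w (k + 1) n.
Proof.
  induction n as [|n IH]; intro k.
  - simpl. rewrite Z.add_0_r. ring.
  - change (wprod w k (S (S n))) with (Cmod (w (k + Z.of_nat (S n))%Z) * wprod w k (S n)).
    rewrite IH. replace (k + Z.of_nat (S n))%Z with (k + 1 + Z.of_nat n)%Z by lia.
    simpl. ring.
Qed.

Lemma wshift_single (w : Z -> Cpx) (j : Z) (u : Cpx) :
  wshift w (single j u) = single (j + 1) (Cmul (w j) u).
Proof.
  apply functional_extensionality; intro z. unfold wshift, single.
  destruct (Z.eq_dec (z - 1) j); destruct (Z.eq_dec z (j + 1)); try lia.
  - subst. reflexivity.
  - apply Cmul_C0.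
Qed.

Lemma wshift_pow_single (w : Z -> Cpx) (n : nat) : forall k v, exists u,
  opow (wshift w) n (single k v) = single (k + Z.of_nat n) u /\
  Cmod u = wprod w k n * Cmod v.
Proof.
  induction n as [|n IH]; intros k v.
  - exists v; simpl. rewrite Z.add_0_r. split; [reflexivity | ring].
  - destruct (IH k v) as [u [Hu Hmod]]. exists (Cmul (w (k + Z.of_nat n)%Z) u).
    simpl. rewrite Hu, wshift_single. split.
    + f_equal. lia.
    + rewrite Cmod_mul, Hmod. ring.
Qed.

Lemma norm_wshift_pow_e (w : Z -> Cpx) (k : Z) (n : nat) :
  l2norm (opow (wshift w) n (e k)) = wprod w k n.
Proof.
  rewrite e_single. destruct (wshift_pow_single w n k Defs.C1) as [u [Hu Hmod]].
  rewrite Hu, (proj2 (single_l2 _ _)), Hmod, Cmod_C1. ring.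
Qed.

Section BoundedWeights.

Variable w : Z -> Cpx.
Variables c d : R.
Hypothesis c_pos : 0 < c.
Hypothesis w_bounds : forall n, c <= Cmod (w n) <= d.

Lemma weight_pos (n : Z) : Cmod (w n) > 0.
Proof. destruct (w_bounds n); lra. Qed.

Lemma wprod_pos (k : Z) (n : nat) : wprod w k n > 0.
Proof. induction n; simpl; [lra|]. pose proof (weight_pos (k + Z.of_nat n)%Z); nra. Qed.

Variable B : vec -> vec.
Hypothesis B_inverse : forall x, is_l2 x -> B (wshift w x) = x /\ wshift w (B x) = x.

Lemma B_single (j : Z) (u : Cpx) : exists u',
  B (single j u) = single (j - 1) u' /\ Cmod (w (j - 1)%Z) * Cmod u' = Cmod u.
Proof.
  set (u' := Cmul (Cinv (w (j - 1)%Z)) u).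
  assert (Hw : Cmul (w (j - 1)%Z) u' = u) by apply Cmul_Cinv, weight_pos.
  assert (Hx : wshift w (single (j - 1) u') = single j u).
  { rewrite wshift_single, Hw. f_equal; lia. }
  exists u'. split.
  - rewrite <- Hx. apply B_inverse, single_l2.
  - rewrite <- Cmod_mul, Hw. reflexivity.
Qed.

Lemma B_pow_single (n : nat) : forall k v, exists u,
  opow B n (single k v) = single (k - Z.of_nat n) u /\
  wprod w (k - Z.of_nat n) n * Cmod u = Cmod v.
Proof.
  induction n as [|n IH]; intros k v.
  - exists v; simpl. rewrite Z.sub_0_r. split; [reflexivity | ring].
  - destruct (IH k v) as [u [Hu Hmod]].
    destruct (B_single (k - Z.of_nat n) u) as [u' [Hu' Hmod']].
    exists u'. cbn [opow]. rewrite Hu, Hu'. split.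
    + f_equal. lia.
    + replace (k - Z.of_nat (S n))%Z with (k - Z.of_nat n - 1)%Z by lia.
      rewrite wprod_S_first, Z.sub_add, <- Hmod, <- Hmod'. ring.
Qed.

Lemma norm_B_pow_e (k : Z) (n : nat) :
  l2norm (opow B n (e k)) = / wprod w (k - Z.of_nat n) n.
Proof.
  rewrite e_single. destruct (B_pow_single n k Defs.C1) as [u [Hu Hmod]].
  rewrite Hu, (proj2 (single_l2 _ _)). rewrite Cmod_C1 in Hmod.
  pose proof (wprod_pos (k - Z.of_nat n) n).
  apply (Rmult_eq_reg_l (wprod w (k - Z.of_nat n) n)); [|lra].
  rewrite Hmod. field. lra.
Qed.

Lemma wprod_step (k : Z) (n : nat) :
  wprod w (k + 1) n <= d / c * wprod w k n /\ wprod w k n <= d / c * wprod w (k + 1) n.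
Proof.
  pose proof (wprod_S_first w n k) as Hfirst. simpl in Hfirst.
  pose proof (wprod_ge0 w k n). pose proof (wprod_ge0 w (k + 1) n).
  destruct (w_bounds k). destruct (w_bounds (k + Z.of_nat n)%Z).
  split; apply (Rmult_le_reg_r c); try lra;
    match goal with |- _ <= d / c * ?p * c => replace (d / c * p * c) with (d * p) by (field; lra) end;
    nra.
Qed.

Lemma wprod_steps (j : nat) : forall a n,
  wprod w (a + Z.of_nat j) n <= (d / c) ^ j * wprod w a n /\
  wprod w a n <= (d / c) ^ j * wprod w (a + Z.of_nat j) n.
Proof.
  assert (Hdc : 0 < d / c) by (destruct (w_bounds 0%Z); apply Rdiv_lt_0_compat; lra).
  induction j as [|j IH]; intros a n.
  - simpl. rewrite Z.add_0_r. lra.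
  - destruct (IH a n) as [IH1 IH2].
    destruct (wprod_step (a + Z.of_nat j) n) as [Hs1 Hs2].
    replace (a + Z.of_nat j + 1)%Z with (a + Z.of_nat (S j))%Z in Hs1, Hs2 by lia.
    pose proof (pow_lt _ j Hdc). change ((d / c) ^ S j) with (d / c * (d / c) ^ j). split.
    + apply (Rle_trans _ _ _ Hs1). rewrite Rmult_assoc. apply Rmult_le_compat_l; lra.
    + apply (Rle_trans _ _ _ IH2). rewrite (Rmult_comm (d / c)), Rmult_assoc.
      apply Rmult_le_compat_l; lra.
Qed.

Lemma wprod_comparable (a b : Z) : exists C, C > 0 /\
  forall n s, wprod w (b + s) n <= C * wprod w (a + s) n.
Proof.
  assert (Hdc : 0 < d / c) by (destruct (w_bounds 0%Z); apply Rdiv_lt_0_compat; lra).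
  destruct (Z_le_dec a b) as [Hab | Hab].
  - exists ((d / c) ^ Z.to_nat (b - a)). split; [apply pow_lt; exact Hdc|].
    intros n s. replace (b + s)%Z with (a + s + Z.of_nat (Z.to_nat (b - a)))%Z by lia.
    apply wprod_steps.
  - exists ((d / c) ^ Z.to_nat (a - b)). split; [apply pow_lt; exact Hdc|].
    intros n s. replace (a + s)%Z with (b + s + Z.of_nat (Z.to_nat (a - b)))%Z by lia.
    apply wprod_steps.
Qed.

End BoundedWeights.

Lemma Un_cv_dominated (f g : nat -> R) (C : R) : C > 0 ->
  (forall n, 0 <= g n <= C * f n) -> Un_cv f 0 -> Un_cv g 0.
Proof.
  intros HC Hg Hf eps Heps.
  destruct (Hf (eps / C)) as [N HN]; [apply Rdiv_lt_0_compat; lra|].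
  exists N; intros n Hn. specialize (HN n Hn). specialize (Hg n).
  unfold R_dist in *. rewrite Rminus_0_r in *. rewrite Rabs_right by lra.
  pose proof (Rle_abs (f n)).
  apply (Rmult_lt_compat_l C) in HN; [|exact HC].
  replace (C * (eps / C)) with eps in HN by (field; lra). nra.
Qed.

Lemma quotient_bound (a b x y Q1 Q2 : R) :
  0 <= a -> 0 < x -> 0 < y -> 0 < Q2 ->
  a <= Q1 * b -> y <= Q2 * x -> a * / x <= Q1 * Q2 * (b * / y).
Proof.
  intros Ha Hx Hy HQ2 Hab Hyx.
  assert (Hinv : / x <= Q2 * / y).
  { apply (Rmult_le_reg_r (x * y)); [nra|].
    replace (/ x * (x * y)) with y by (field; lra).
    replace (Q2 * / y * (x * y)) with (Q2 * x) by (field; lra). lra. }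
  assert (0 < / x) by (apply Rinv_0_lt_compat; exact Hx).
  assert (0 < / y) by (apply Rinv_0_lt_compat; exact Hy).
  nra.
Qed.

Theorem mainTheorem7
  (w : Z -> Cpx)
  (hw : exists c d, 0 < c /\ forall n, c <= Cmod (w n) <= d)
  (B : vec -> vec)
  (hB : forall x, is_l2 x -> B (wshift w x) = x /\ wshift w (B x) = x)
  (nk : nat -> nat)
  (hpos : forall k, (0 < nk k)%nat)
  (hinc : forall k, (nk k < nk (S k))%nat)
  (m : nat -> Z)
  (hinv : forall k x, in_cspan m x -> in_cspan m (opow (wshift w) (nk k) x)) :
  ((exists i, Un_cv (fun k => l2norm (opow (wshift w) (nk k) (e (m i)))) 0) ->
     forall r, Un_cv (fun k => l2norm (opow (wshift w) (nk k) (e (m r)))) 0)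
  /\
  ((exists i j, Un_cv (fun k => l2norm (opow (wshift w) (nk k) (e (m i)))
                               * l2norm (opow B (nk k) (e (m j)))) 0) ->
     forall r p, Un_cv (fun k => l2norm (opow (wshift w) (nk k) (e (m r)))
                               * l2norm (opow B (nk k) (e (m p)))) 0).
Proof.
  destruct hw as [c [d [hc hwb]]].
  split.
  - intros [i Hi] r.
    destruct (wprod_comparable w c d hc hwb (m i) (m r)) as [C [HC Hcmp]].
    eapply (Un_cv_dominated _ _ C HC); [|exact Hi].
    intro k. rewrite !norm_wshift_pow_e. split; [apply wprod_ge0|].
    specialize (Hcmp (nk k) 0%Z). rewrite !Z.add_0_r in Hcmp. exact Hcmp.
  - intros [i [j Hij]] r p.
    destruct (wprod_comparable w c d hc hwb (m i) (m r)) as [Q1 [HQ1 HT]].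
    destruct (wprod_comparable w c d hc hwb (m p) (m j)) as [Q2 [HQ2 HB]].
    eapply (Un_cv_dominated _ _ (Q1 * Q2)); [nra| |exact Hij].
    intro k. rewrite !norm_wshift_pow_e, !(norm_B_pow_e w c d hc hwb B hB).
    specialize (HT (nk k) 0%Z). rewrite !Z.add_0_r in HT.
    specialize (HB (nk k) (- Z.of_nat (nk k))%Z). rewrite <- !Z.sub_opp_r, !Z.opp_involutive in HB.
    pose proof (wprod_pos w c d hc hwb (m p - Z.of_nat (nk k)) (nk k)).
    pose proof (wprod_pos w c d hc hwb (m j - Z.of_nat (nk k)) (nk k)).
    split.
    + apply Rmult_le_pos; [apply wprod_ge0 | left; apply Rinv_0_lt_compat; assumption].
    + apply quotient_bound; auto using wprod_ge0.
Qed.
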